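(* For $\alpha\in\mathbb{K}^\times$ let $A_{3,\alpha}$ be the evolution algebra over the field $\mathbb{K}$ with natural basis $\{e_1,e_2\}$ such that $e_1^2=e_1$ and $e_2^2=\alpha e_1+e_2$. For $\alpha,\alpha'\in\mathbb{K}^\times$, $A_{3,\alpha}$ is isomorphic to $A_{3,\alpha'}$ as a $\mathbb{K}$-algebra if and only if $\alpha=\alpha'$.
   Context: An evolution algebra over $\mathbb{K}$ is a $\mathbb{K}$-algebra with a basis $\{e_i\}$ (natural basis) such that $e_ie_j=0$ for $i\neq j$. *)

From mathcomp Require Import all_boot all_order all_algebra.
Set Implicit Arguments. Unset Strict Implicit. Unset Printing Implicit Defensive.
Import GRing.Theory.
Local Open Scope ring_scope.

(* Evolution algebra on K^n (row vectors) with natural basis e_i = 'e_i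
   (delta_mx 0 i) and structure matrix C: e_i * e_i = \sum_k C i k e_k,
   e_i * e_j = 0 for i <> j. *)
Definition evo_mul (K : fieldType) (n : nat) (C : 'M[K]_n) (x y : 'rV[K]_n)
  : 'rV[K]_n := \sum_(i < n) (x 0 i * y 0 i) *: row i C.

Definition A3_mx (K : fieldType) (a : K) : 'M[K]_2 :=
  \matrix_(i < 2, j < 2)
     (if (i == 0 :> nat) then (if (j == 0 :> nat) then 1 else 0)
      else (if (j == 0 :> nat) then a else 1)).

Definition evo_iso (K : fieldType) (n : nat) (C D : 'M[K]_n) : Prop :=
  exists f : 'rV[K]_n -> 'rV[K]_n,
    [/\ (forall (c : K) (u v : 'rV[K]_n), f (c *: u + v) = c *: f u + f v),
        bijective f &
        forall x y, f (evo_mul C x y) = evo_mul D (f x) (f y)].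

From mathcomp Require Import all_boot all_order all_algebra.
Set Implicit Arguments. Unset Strict Implicit. Unset Printing Implicit Defensive.
Import GRing.Theory.
Local Open Scope ring_scope.

(* An isomorphism maps e1, e2 to vectors u, v of A_{3,a'} satisfying the
   relations u^2 = u, uv = 0, v^2 = a u + v of A_{3,a}.  Comparing
   coordinates, the e2-coordinate of u is idempotent; if it were 1, then
   uv = 0 forces v to lie on e1 and v^2 = a u + v gives a = 0.  Hence u = e1,
   v has no e1-component, its e2-coordinate is again idempotent and nonzero,
   so v = e2 and v^2 = a' e1 + e2 must equal a e1 + e2. *)

Lemma sqrf_eq_id (R : idomainType) (x : R) : (x * x == x) = (x == 0) || (x == 1).
Proof. by rewrite -subr_eq0 -[X in _ - X]mulr1 -mulrBr mulf_eq0 subr_eq0. Qed.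

Lemma linear_map0 (R : pzRingType) (V W : lmodType R) (f : V -> W) :
  (forall c u v, f (c *: u + v) = c *: f u + f v) -> f 0 = 0.
Proof.
move=> f_lin; apply: (addrI (f 0)).
by rewrite addr0 -{1}(scale1r (f 0)) -f_lin scale1r addr0.
Qed.

Lemma evo_mul_delta (K : fieldType) (n : nat) (C : 'M[K]_n) (i j : 'I_n) :
  evo_mul C 'e_i 'e_j = (i == j)%:R *: row i C.
Proof.
rewrite /evo_mul (bigD1 i) //= big1 => [|k /negPf ki].
  by rewrite !mxE !eqxx /= mul1r addr0.
by rewrite !mxE ki andbF mul0r scale0r.
Qed.

Lemma eq_rV2 (K : fieldType) (u v : 'rV[K]_2) :
  u 0 0 = v 0 0 -> u 0 1 = v 0 1 -> u = v.
Proof.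
move=> eq0 eq1; apply/rowP => j.
have [->|->] // : j = 0 \/ j = 1.
by case: j => [[|[|//]] ?]; [left | right]; apply: val_inj.
Qed.

Section A3.

Variables (K : fieldType) (a : K).

Lemma row0_A3 : row 0 (A3_mx a) = 'e_0.
Proof. by apply: eq_rV2; rewrite !mxE. Qed.

Lemma row1_A3 : row 1 (A3_mx a) = a *: 'e_0 + 'e_1.
Proof. by apply: eq_rV2; rewrite !mxE /= ?mulr1 ?mulr0 ?addr0 ?add0r. Qed.

Lemma A3_mul_eqP (x y z : 'rV[K]_2) :
  evo_mul (A3_mx a) x y = z <->
  x 0 0 * y 0 0 + a * (x 0 1 * y 0 1) = z 0 0 /\ x 0 1 * y 0 1 = z 0 1.
Proof.
have mulE j : evo_mul (A3_mx a) x y 0 j =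
    x 0 0 * y 0 0 * A3_mx a 0 j + x 0 1 * y 0 1 * A3_mx a 1 j.
  rewrite summxE big_ord_recl big_ord1 (_ : lift 0 0 = 1 :> 'I_2) ?mxE //.
  exact: val_inj.
have [<- <-] : evo_mul (A3_mx a) x y 0 0 = x 0 0 * y 0 0 + a * (x 0 1 * y 0 1) /\
               evo_mul (A3_mx a) x y 0 1 = x 0 1 * y 0 1.
  by rewrite !mulE !mxE /= !mulr1 mulr0 add0r [_ * a]mulrC; split.
by split=> [<- // | [eq0 eq1]]; apply: eq_rV2.
Qed.

End A3.

Lemma A3_relations_eq (K : fieldType) (a a' : K) (u v : 'rV[K]_2) :
  a != 0 -> u != 0 ->
  evo_mul (A3_mx a') u u = u -> evo_mul (A3_mx a') u v = 0 ->
  evo_mul (A3_mx a') v v = a *: u + v -> a = a'.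
Proof.
move=> a_neq0 u_neq0 /A3_mul_eqP[uu0 uu1] /A3_mul_eqP[uv0 uv1] /A3_mul_eqP[vv0 vv1].
rewrite !mxE in uv0 uv1 vv0 vv1.
have u1_0 : u 0 1 = 0.
  move/eqP: uu1; rewrite sqrf_eq_id => /orP[/eqP // | /eqP u1_1].
  rewrite u1_1 mul1r in uv1 vv1.
  by move: vv1; rewrite uv1 mulr0 mulr1 addr0 => /esym/eqP; rewrite (negPf a_neq0).
rewrite u1_0 !(mulr0, mul0r, addr0) in uu0 uv0 vv1.
have u0_1 : u 0 0 = 1.
  move/eqP: uu0; rewrite sqrf_eq_id => /orP[/eqP u0_0 | /eqP //].
  by case/eqP: u_neq0; apply: eq_rV2; rewrite mxE.
rewrite u0_1 mul1r in uv0; rewrite u0_1 uv0 mulr1 mulr0 add0r addr0 in vv0.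
have v1_1 : v 0 1 = 1.
  move/eqP: vv1; rewrite add0r sqrf_eq_id => /orP[/eqP v1_0 | /eqP //].
  by move: vv0; rewrite v1_0 !mulr0 => /esym/eqP; rewrite (negPf a_neq0).
by rewrite v1_1 !mulr1 in vv0.
Qed.

Theorem lemma3p4 (K : fieldType) (a a' : K) (ha : a != 0) (ha' : a' != 0) :
  evo_iso (A3_mx a) (A3_mx a') <-> a = a'.
Proof.
split=> [[f [f_lin f_bij f_mul]] | <-]; last first.
  by exists id; split=> //; exists id.
apply: (@A3_relations_eq _ a a' (f 'e_0) (f 'e_1) ha).
- apply/eqP => fe0_0.
  have /rowP/(_ 0) := bij_inj f_bij (etrans fe0_0 (esym (linear_map0 f_lin))).
  by rewrite !mxE /= => /eqP; rewrite oner_eq0.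
- by rewrite -f_mul evo_mul_delta row0_A3 scale1r.
- by rewrite -f_mul evo_mul_delta /= scale0r (linear_map0 f_lin).
- by rewrite -f_mul evo_mul_delta row1_A3 scale1r f_lin.
Qed.
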